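(* Fix $t\ge1$. Let $\widehat g_{t-1}$, $b_t$, $r_t$ be random vectors in $\mathbb{R}^d$, $B_t$ a random $d\times d$ matrix, $\eta_{t-1}>0$ and $\lambda_t>0$, with finite second moments as needed. Define $u_{t-1}=\widehat g_{t-1}/\|\widehat g_{t-1}\|_2$ if $\widehat g_{t-1}\ne0$ and $u_{t-1}=0$ otherwise, and $P^\perp_{t-1}=I-u_{t-1}u_{t-1}^\top$. Assume \[ b_t=\eta_{t-1}B_t\widehat g_{t-1}+r_t \] and \[ \widehat g_{t-1}^\top B_t\widehat g_{t-1}\ge\lambda_t\|\widehat g_{t-1}\|_2^2\quad\text{almost surely}. \] Let $b_t^\perp=P^\perp_{t-1}b_t$. Then \[ \mathbb{E}\|b_t^\perp\|_2^2\le\mathbb{E}\|b_t\|_2^2-\eta_{t-1}^2\lambda_t^2\,\mathbb{E}\|\widehat g_{t-1}\|_2^2+2\eta_{t-1}\lambda_t\,\mathbb{E}\big[\|\widehat g_{t-1}\|_2\|r_t\|_2\big]. \] In particular, if $\mathbb{E}\|r_t\|_2^2\le\epsilon_t^2$ for some $\epsilon_t\ge0$, then \[ \mathbb{E}\|b_t^\perp\|_2^2\le\mathbb{E}\|b_t\|_2^2-\eta_{t-1}^2\lambda_t^2\,\mathbb{E}\|\widehat g_{t-1}\|_2^2+2\eta_{t-1}\lambda_t\,\epsilon_t\sqrt{\mathbb{E}\|\widehat g_{t-1}\|_2^2}. \]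
   Context: Interpretation: $\widehat g_{t-1}$ is the previous stochastic gradient in an asynchronous stochastic gradient iteration, $b_t$ is the staleness-induced bias of the current gradient (linearized with operator $B_t$, stepsize $\eta_{t-1}$, and remainder $r_t$), and $b_t^\perp$ is the bias after projecting out the previous-gradient direction. *)

From HB Require Import structures.
From mathcomp Require Import all_boot all_order all_algebra.
From mathcomp Require Import all_classical all_reals all_analysis.
Set Implicit Arguments. Unset Strict Implicit. Unset Printing Implicit Defensive.
Import Order.TTheory GRing.Theory Num.Theory.
Local Open Scope ring_scope.

Definition sqnorm (R : realType) (n : nat) (v : 'cV[R]_n) : R :=
  \sum_(i < n) v i 0 ^+ 2.

Definition norm2 (R : realType) (n : nat) (v : 'cV[R]_n) : R :=
  Num.sqrt (sqnorm v).

Definition quadf (R : realType) (n : nat) (A : 'M[R]_n) (v : 'cV[R]_n) : R :=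
  (v^T *m A *m v) 0 0.

Definition unitdir (R : realType) (n : nat) (v : 'cV[R]_n) : 'cV[R]_n :=
  if v == 0 then 0 else (norm2 v)^-1 *: v.

Definition Pperp (R : realType) (n : nat) (v : 'cV[R]_n) : 'M[R]_n :=
  1%:M - unitdir v *m (unitdir v)^T.

Definition Esp (R : realType) (d : measure_display) (T : measurableType d)
  (P : probability T R) (f : T -> R) : \bar R :=
  (\int[P]_x (f x)%:E)%E.

(* Write u for the unit direction of g (u = 0 if g = 0), so that
   |P^perp b|^2 = |b|^2 - <u, b>^2.  Since <u, B g> >= lam |g| by the curvature
   hypothesis and <u, r> >= -|r| by Cauchy-Schwarz, <u, b> >= a - |r| with
   a = eta lam |g|; and s >= a - m with a, m >= 0 forces s^2 >= a^2 - 2 a m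
   (if m <= a then s^2 >= (a - m)^2, otherwise a^2 - 2 a m < 0).  Integrating
   this pointwise bound gives the first inequality; the second follows from
   E[|g| |r|] <= sqrt(E|g|^2) sqrt(E|r|^2), i.e. Hoelder with p = q = 2. *)

From HB Require Import structures.
From mathcomp Require Import all_boot all_order all_algebra.
From mathcomp Require Import all_classical all_reals all_analysis.
From mathcomp Require Import measurable_realfun.
From mathcomp Require Import ring lra.
Set Implicit Arguments. Unset Strict Implicit. Unset Printing Implicit Defensive.
Import Order.TTheory GRing.Theory Num.Theory numFieldNormedType.Exports.
Local Open Scope ring_scope.

Lemma ler_sqr_of_subr_le (R : realFieldType) (a m s : R) :
  0 <= a -> 0 <= m -> a - m <= s -> a ^+ 2 - 2 * a * m <= s ^+ 2.
Proof.
move=> a0 m0 hs; have [ma|am] := lerP m a; last by nra.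
have s0 : 0 <= a - m by lra.
nra.
Qed.

Section euclidean.
Variables (R : realType) (n : nat).
Implicit Types (u v w g : 'cV[R]_n) (c : R).

Definition dot u v : R := \sum_(i < n) u i 0 * v i 0.

Lemma sqnorm_dot v : sqnorm v = dot v v.
Proof. by apply: eq_bigr => i _; rewrite expr2. Qed.

Lemma sqnorm_ge0 v : 0 <= sqnorm v.
Proof. by apply: sumr_ge0 => i _; rewrite sqr_ge0. Qed.

Lemma sqnorm_eq0 v : (sqnorm v == 0) = (v == 0).
Proof.
apply/eqP/eqP => [|->]; last by rewrite /sqnorm big1 // => i _; rewrite mxE expr0n.
move/eqP; rewrite psumr_eq0 => [/allP v0|i _]; last exact: sqr_ge0.
apply/matrixP => i j; rewrite (ord1 j) mxE; apply/eqP.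
by rewrite -sqrf_eq0; have := v0 i (mem_index_enum i).
Qed.

Lemma norm2_ge0 v : 0 <= norm2 v.
Proof. exact: sqrtr_ge0. Qed.

Lemma norm2_sqr v : norm2 v ^+ 2 = sqnorm v.
Proof. by rewrite sqr_sqrtr // sqnorm_ge0. Qed.

Lemma norm2_eq0 v : (norm2 v == 0) = (v == 0).
Proof. by rewrite sqrtr_eq0 le_eqVlt ltNge sqnorm_ge0 orbF sqnorm_eq0. Qed.

Lemma dotDr u v w : dot u (v + w) = dot u v + dot u w.
Proof. by rewrite /dot -big_split; apply: eq_bigr => i _; rewrite mxE mulrDr. Qed.

Lemma dotZl c u v : dot (c *: u) v = c * dot u v.
Proof. by rewrite /dot mulr_sumr; apply: eq_bigr => i _; rewrite mxE mulrA. Qed.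

Lemma dotZr c u v : dot u (c *: v) = c * dot u v.
Proof. by rewrite /dot mulr_sumr; apply: eq_bigr => i _; rewrite mxE mulrCA. Qed.

Lemma quadfE (A : 'M[R]_n) v : quadf A v = dot v (A *m v).
Proof. by rewrite /quadf -mulmxA mxE; apply: eq_bigr => i _; rewrite mxE. Qed.

Lemma sqnormDZ c u v :
  sqnorm (v + c *: u) = sqnorm v + 2 * c * dot u v + c ^+ 2 * sqnorm u.
Proof.
rewrite /sqnorm /dot !mulr_sumr -!big_split /=.
by apply: eq_bigr => i _; rewrite !mxE; ring.
Qed.

Lemma dot_ge_Nnorm2 u v : sqnorm u <= 1 -> - norm2 v <= dot u v.
Proof.
move=> u1; have [v0|v0] := eqVneq v 0.
  by rewrite v0 /dot big1 ?oppr_le0 ?norm2_ge0 // => i _; rewrite mxE mulr0.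
have m0 : 0 < norm2 v by rewrite lt_def norm2_eq0 v0 norm2_ge0.
have := sqnorm_ge0 (v + norm2 v *: u); rewrite sqnormDZ -norm2_sqr.
nra.
Qed.

Lemma dot_unitdir g v : dot (unitdir g) v = dot g v / norm2 g.
Proof.
rewrite /unitdir; case: eqP => [->|_]; last by rewrite dotZl mulrC.
by rewrite /dot !big1 ?mul0r // => i _; rewrite mxE mul0r.
Qed.

Lemma sqnorm_unitdir g : g != 0 -> sqnorm (unitdir g) = 1.
Proof.
move=> g0; have N0 : norm2 g != 0 by rewrite norm2_eq0.
rewrite sqnorm_dot dot_unitdir /unitdir (negbTE g0) dotZr -sqnorm_dot -norm2_sqr.
by field.
Qed.

Lemma Pperp_mulmx g v : Pperp g *m v = v + (- dot (unitdir g) v) *: unitdir g.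
Proof.
rewrite /Pperp mulmxBl mul1mx -mulmxA scaleNr.
congr (_ - _); rewrite -mul_mx_scalar; congr (_ *m _).
by apply/matrixP => i j; rewrite !ord1 !mxE mulr1n; apply: eq_bigr => k _; rewrite mxE.
Qed.

Lemma sqnorm_Pperp g v : sqnorm (Pperp g *m v) = sqnorm v - dot (unitdir g) v ^+ 2.
Proof.
rewrite Pperp_mulmx sqnormDZ; have [->|g0] := eqVneq g 0.
  by rewrite /unitdir eqxx /dot big1 => [|i _]; rewrite ?mxE ?mul0r; ring.
by rewrite sqnorm_unitdir //; ring.
Qed.

Lemma sqnorm_unitdir_le1 g : sqnorm (unitdir g) <= 1.
Proof.
have [->|/sqnorm_unitdir-> //] := eqVneq g 0.
by rewrite /unitdir eqxx /sqnorm big1 // => i _; rewrite mxE expr0n.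
Qed.

Lemma quadf_div_norm2_ge (A : 'M[R]_n) g (lam : R) :
  lam * sqnorm g <= quadf A g -> lam * norm2 g <= quadf A g / norm2 g.
Proof.
have [->|g0] := eqVneq g 0.
  have -> : norm2 (0 : 'cV[R]_n) = 0 by apply/eqP; rewrite norm2_eq0.
  by rewrite invr0 !mulr0.
have N0 : 0 < norm2 g by rewrite lt_def norm2_eq0 g0 norm2_ge0.
by rewrite ler_pdivlMr // -mulrA -expr2 norm2_sqr.
Qed.

Lemma sqnorm_Pperp_le (A : 'M[R]_n) g r b (eta lam : R) :
  0 <= eta -> 0 <= lam -> lam * sqnorm g <= quadf A g ->
  b = eta *: (A *m g) + r ->
  sqnorm (Pperp g *m b) <=
    sqnorm b - eta ^+ 2 * lam ^+ 2 * sqnorm g + 2 * eta * lam * (norm2 g * norm2 r).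
Proof.
move=> eta0 lam0 hA bE; rewrite sqnorm_Pperp -(norm2_sqr g).
have hs : eta * lam * norm2 g - norm2 r <= dot (unitdir g) b.
  rewrite bE dotDr dotZr dot_unitdir -quadfE -mulrA.
  apply: lerD; last exact/dot_ge_Nnorm2/sqnorm_unitdir_le1.
  by rewrite ler_wpM2l // quadf_div_norm2_ge.
have := ler_sqr_of_subr_le (mulr_ge0 (mulr_ge0 eta0 lam0) (norm2_ge0 g)) (norm2_ge0 r) hs.
lra.
Qed.

End euclidean.

Lemma measurable_invR (R : realType) : measurable_fun [set: R] GRing.inv.
Proof.
have closed0 : closed [set 0 : R]%classic.
  exact/accessible_closed_set1/hausdorff_accessible/Rhausdorff.
rewrite -(setUCr [set 0]%classic); apply/measurable_funU => //.
  by apply: open_measurable; exact: closed_openC.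
split; first exact: measurable_fun_set1.
apply: open_continuous_measurable_fun; first exact: closed_openC.
by move=> x /set_mem/eqP x0; exact: inv_continuous.
Qed.

Section measurable_euclidean.
Context d (T : measurableType d) (R : realType) (n : nat).
Implicit Types u v : T -> 'cV[R]_n.

Definition measurable_cV u := forall i, measurable_fun [set: T] (fun x => u x i 0).

Lemma measurable_dot u v : measurable_cV u -> measurable_cV v ->
  measurable_fun [set: T] (fun x => dot (u x) (v x)).
Proof. by move=> mu mv; apply: measurable_sum => i; exact: measurable_funM. Qed.

Lemma measurable_sqnorm u : measurable_cV u -> measurable_fun [set: T] (fun x => sqnorm (u x)).
Proof. by move=> mu; under eq_fun do rewrite sqnorm_dot; exact: measurable_dot. Qed.

Lemma measurable_norm2 u : measurable_cV u -> measurable_fun [set: T] (fun x => norm2 (u x)).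
Proof.
move=> mu; have msqrt := continuous_measurable_fun (@sqrt_continuous R).
exact: measurableT_comp msqrt (measurable_sqnorm mu).
Qed.

Lemma measurable_sqnorm_Pperp u v : measurable_cV u -> measurable_cV v ->
  measurable_fun [set: T] (fun x => sqnorm (Pperp (u x) *m v x)).
Proof.
move=> mu mv; under eq_fun do rewrite sqnorm_Pperp dot_unitdir.
apply: measurable_funB; first exact: measurable_sqnorm.
apply/measurable_funX/measurable_funM; first exact: measurable_dot.
exact: measurableT_comp (@measurable_invR R) (measurable_norm2 mu).
Qed.

End measurable_euclidean.

Section cauchy_schwarz.
Context d (T : measurableType d) (R : realType) (mu : {measure set T -> \bar R}).
Local Open Scope ereal_scope.
Implicit Types f h : T -> R.

Lemma Lnorm2_sqrt f : mu.-integrable [set: T] (fun x => (f x ^+ 2)%:E) ->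
  Lnorm mu 2%:E (EFin \o f) = (Num.sqrt (fine (\int[mu]_x (f x ^+ 2)%:E)))%:E.
Proof.
move=> if2; rewrite unlock.
rewrite (eq_integral (fun x => (f x ^+ 2)%:E)); last first.
  by move=> x _ /=; rewrite powR_mulrn // real_normK ?num_real.
have I0 : (0 <= fine (\int[mu]_x (f x ^+ 2)%:E))%R.
  by apply/fine_ge0/integral_ge0 => x _; rewrite lee_fin sqr_ge0.
by rewrite -{1}(fineK (integrable_fin_num _ if2)) // poweR_EFin powR12_sqrt.
Qed.

Lemma integral_abs_mul_le f h :
  measurable_fun [set: T] f -> measurable_fun [set: T] h ->
  mu.-integrable [set: T] (fun x => (f x ^+ 2)%:E) ->
  mu.-integrable [set: T] (fun x => (h x ^+ 2)%:E) ->
  \int[mu]_x `|f x * h x|%:E <=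
    (Num.sqrt (fine (\int[mu]_x (f x ^+ 2)%:E)) *
     Num.sqrt (fine (\int[mu]_x (h x ^+ 2)%:E)))%:E.
Proof.
move=> mf mh if2 ih2.
have half : (2^-1 + 2^-1 = 1 :> R)%R by rewrite -div1r -splitr.
have := hoelder mu mf mh (ltr0n _ 2) (ltr0n _ 2) half.
by rewrite Lnorm1 !Lnorm2_sqrt.
Qed.

Lemma integrable_mul_sqr f h :
  measurable_fun [set: T] f -> measurable_fun [set: T] h ->
  mu.-integrable [set: T] (fun x => (f x ^+ 2)%:E) ->
  mu.-integrable [set: T] (fun x => (h x ^+ 2)%:E) ->
  mu.-integrable [set: T] (fun x => (f x * h x)%:E).
Proof.
move=> mf mh if2 ih2; apply/integrableP; split.
  exact/measurable_EFinP/measurable_funM.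
exact: le_lt_trans (integral_abs_mul_le mf mh if2 ih2) (ltry _).
Qed.

End cauchy_schwarz.

Section expectation.
Context d (T : measurableType d) (R : realType) (P : probability T R).
Local Open Scope ereal_scope.
Implicit Types f h : T -> R.

Lemma Esp_le_ae f h : measurable_fun [set: T] f -> (forall x, (0 <= f x)%R) ->
  P.-integrable [set: T] (EFin \o h) -> {ae P, forall x, (f x <= h x)%R} ->
  Esp P f <= Esp P h.
Proof.
move=> mf f0 ih fh; have mh := measurable_int _ ih.
have mhf : measurable_fun [set: T] (h \max f).
  exact/measurable_maxr/mf/measurable_EFinP.
(* [f <= h] only a.e., so compare instead with [h \max f], which equals [h] a.e. *)
have -> : Esp P h = Esp P (h \max f).
  apply: ae_eq_integral => //; first exact/measurable_EFinP.
  by apply: filterS fh => x fhx _; rewrite /= max_l.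
apply: ge0_le_integral => //; first by move=> x _; rewrite lee_fin.
- exact/measurable_EFinP.
- exact/measurable_EFinP.
- by move=> x _; rewrite lee_fin /= le_max lexx orbT.
Qed.

Lemma EspD f h : P.-integrable [set: T] (EFin \o f) -> P.-integrable [set: T] (EFin \o h) ->
  Esp P (fun x => f x + h x)%R = Esp P f + Esp P h.
Proof. exact: integralD_EFin. Qed.

Lemma EspB f h : P.-integrable [set: T] (EFin \o f) -> P.-integrable [set: T] (EFin \o h) ->
  Esp P (fun x => f x - h x)%R = Esp P f - Esp P h.
Proof. exact: integralB_EFin. Qed.

Lemma EspZl c f : P.-integrable [set: T] (EFin \o f) ->
  Esp P (fun x => c * f x)%R = c%:E * Esp P f.
Proof. by move=> if_; rewrite /Esp -integralZl. Qed.

Let EFin_sqnormE n (w : T -> 'cV[R]_n) :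
  (fun x => (sqnorm (w x))%:E) = (fun x => (norm2 (w x) ^+ 2)%:E).
Proof. by apply/funext => x; rewrite norm2_sqr. Qed.

Lemma Esp_norm2_mul_le n (u v : T -> 'cV[R]_n) : measurable_cV u -> measurable_cV v ->
  P.-integrable [set: T] (fun x => (sqnorm (u x))%:E) ->
  P.-integrable [set: T] (fun x => (sqnorm (v x))%:E) ->
  Esp P (fun x => norm2 (u x) * norm2 (v x))%R <=
    (Num.sqrt (fine (Esp P (fun x => sqnorm (u x)))) *
     Num.sqrt (fine (Esp P (fun x => sqnorm (v x)))))%:E.
Proof.
move=> mu mv iu iv; rewrite /Esp !EFin_sqnormE; rewrite !EFin_sqnormE in iu iv.
under eq_integral do rewrite -[(_ * _)%R]ger0_norm ?mulr_ge0 ?norm2_ge0 //.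
exact: integral_abs_mul_le (measurable_norm2 mu) (measurable_norm2 mv) iu iv.
Qed.

Lemma integrable_norm2_mul n (u v : T -> 'cV[R]_n) : measurable_cV u -> measurable_cV v ->
  P.-integrable [set: T] (fun x => (sqnorm (u x))%:E) ->
  P.-integrable [set: T] (fun x => (sqnorm (v x))%:E) ->
  P.-integrable [set: T] (fun x => (norm2 (u x) * norm2 (v x))%:E).
Proof.
move=> mu mv iu iv; rewrite !EFin_sqnormE in iu iv.
exact: integrable_mul_sqr (measurable_norm2 mu) (measurable_norm2 mv) iu iv.
Qed.

End expectation.

Theorem propositionF1 (R : realType) (dm : measure_display) (T : measurableType dm)
  (P : probability T R) (n : nat)
  (g b r : nat -> T -> 'cV[R]_n) (B : nat -> T -> 'M[R]_n)
  (eta lam : nat -> R) (t : nat) :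
  (1 <= t)%N -> 0 < eta t.-1 -> 0 < lam t ->
  (forall i, measurable_fun setT (fun x => g t.-1 x i 0)) ->
  (forall i, measurable_fun setT (fun x => b t x i 0)) ->
  (forall i, measurable_fun setT (fun x => r t x i 0)) ->
  (forall i j, measurable_fun setT (fun x => B t x i j)) ->
  P.-integrable setT (fun x => (sqnorm (g t.-1 x))%:E) ->
  P.-integrable setT (fun x => (sqnorm (b t x))%:E) ->
  P.-integrable setT (fun x => (sqnorm (r t x))%:E) ->
  (forall x, b t x = eta t.-1 *: (B t x *m g t.-1 x) + r t x) ->
  {ae P, forall x, lam t * sqnorm (g t.-1 x) <= quadf (B t x) (g t.-1 x)} ->
  (Esp P (fun x => sqnorm (Pperp (g t.-1 x) *m b t x))
     <= Esp P (fun x => sqnorm (b t x))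
        - ((eta t.-1) ^+ 2 * (lam t) ^+ 2)%:E * Esp P (fun x => sqnorm (g t.-1 x))
        + (2 * eta t.-1 * lam t)%:E
          * Esp P (fun x => (norm2 (g t.-1 x) * norm2 (r t x))%R))%E
  /\
  (forall eps : R, 0 <= eps ->
     (Esp P (fun x => sqnorm (r t x)) <= (eps ^+ 2)%:E)%E ->
     (Esp P (fun x => sqnorm (Pperp (g t.-1 x) *m b t x))
       <= Esp P (fun x => sqnorm (b t x))
          - ((eta t.-1) ^+ 2 * (lam t) ^+ 2)%:E * Esp P (fun x => sqnorm (g t.-1 x))
          + (2 * eta t.-1 * lam t * eps
             * Num.sqrt (fine (Esp P (fun x => sqnorm (g t.-1 x)))))%:E)%E).
Proof.
move=> _ eta0 lam0 mg mb mr _ ig ib ir bE hA.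
set c1 := eta t.-1 ^+ 2 * lam t ^+ 2; set c2 := 2 * eta t.-1 * lam t.
have igr := integrable_norm2_mul mg mr ig ir.
have igc := integrableZl measurableT c1 ig.
have ibg := integrableB measurableT ib igc.
have igr2 := integrableZl measurableT c2 igr.
have bound : (Esp P (fun x => sqnorm (Pperp (g t.-1 x) *m b t x)) <=
    Esp P (fun x => sqnorm (b t x) - c1 * sqnorm (g t.-1 x)
                    + c2 * (norm2 (g t.-1 x) * norm2 (r t x)))%R)%E.
  apply: Esp_le_ae; first exact: measurable_sqnorm_Pperp.
  - by move=> x; exact: sqnorm_ge0.
  - exact (integrableD measurableT ibg igr2).
  apply: filterS hA => x hx.
  exact: sqnorm_Pperp_le (ltW eta0) (ltW lam0) hx (bE x).
rewrite EspD ?EspB ?EspZl // in bound.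
split=> // eps eps0 hR; apply: (le_trans bound); apply: leeD2l.
rewrite -mulrA [(c2 * _)%:E]EFinM; apply: lee_wpmul2l; first by rewrite lee_fin !mulr_ge0 // ltW.
apply: (le_trans (Esp_norm2_mul_le mg mr ig ir)).
rewrite lee_fin mulrC ler_wpM2r ?sqrtr_ge0 //.
rewrite -(ger0_norm eps0) -sqrtr_sqr ler_wsqrtr // -lee_fin fineK //.
exact: integrable_fin_num.
Qed.
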